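(* Let $\tilde A,\tilde B\in\mathbb{R}^{m\times n}$ and fix any $(i,j)\in\{1,\dots,m\}\times\{1,\dots,n\}$. Define $\bar A=\tilde A-\mathbf{1}_m\tilde A_{(i)}-(\tilde A^{(j)}-\tilde a_{i,j}\mathbf{1}_m)\mathbf{1}_n^\mathsf{T}$ and $\bar B=\tilde B-\mathbf{1}_m\tilde B_{(i)}-(\tilde B^{(j)}-\tilde b_{i,j}\mathbf{1}_m)\mathbf{1}_n^\mathsf{T}$, and for $\gamma\in\mathbb{R}$ $\hat A(\gamma)=\tilde A-(\mathbf{1}_m\tilde A_{(i)}+\gamma\mathbf{1}_m\tilde B_{(i)})$, $\hat B(\gamma)=\gamma\tilde B-\big((\tilde A^{(j)}-\tilde a_{i,j}\mathbf{1}_m)\mathbf{1}_n^\mathsf{T}+\gamma(\tilde B^{(j)}-\tilde b_{i,j}\mathbf{1}_m)\mathbf{1}_n^\mathsf{T}\big)$. If there exists $\gamma^*\in\mathbb{R}_{>0}$ with $\operatorname{rank}(\bar A+\gamma^*\bar B)=1$, then the game $(m,n,\tilde A,\tilde B)$ is strategically equivalent to the rank-1 game $(m,n,\hat A(\gamma^* ),\hat B(\gamma^* ))$.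
   Context: $\mathbf{1}_k$ is the all-ones vector of length $k$. For a matrix $M$, $M_{(i)}$ is its $i$-th row (a row vector), $M^{(j)}$ its $j$-th column, and $m_{i,j}$ its $(i,j)$ entry. A bimatrix game $(m,n,A,B)$ has payoff matrices $A,B\in\mathbb{R}^{m\times n}$; its Nash equilibrium set is the set of mixed strategy pairs $(\mathbf{p}^*,\mathbf{q}^* )\in\Delta_m\times\Delta_n$ with $\mathbf{p}^{*\mathsf{T}}A\mathbf{q}^*\ge\mathbf{p}^\mathsf{T}A\mathbf{q}^*$ for all $\mathbf{p}\in\Delta_m$ and $\mathbf{p}^{*\mathsf{T}}B\mathbf{q}^*\ge\mathbf{p}^{*\mathsf{T}}B\mathbf{q}$ for all $\mathbf{q}\in\Delta_n$. Two games are strategically equivalent iff they have the same Nash equilibrium set. A game $(m,n,A,B)$ is rank-1 if $\operatorname{rank}(A+B)=1$. *)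

From HB Require Import structures.
From mathcomp Require Import all_boot all_order all_algebra.
Set Implicit Arguments. Unset Strict Implicit. Unset Printing Implicit Defensive.
Import Order.TTheory GRing.Theory Num.Theory.
Local Open Scope ring_scope.

Definition ones (R : realFieldType) (k : nat) : 'cV[R]_k := const_mx 1.

Definition in_simplex (R : realFieldType) (k : nat) (p : 'cV[R]_k) : Prop :=
  (forall a : 'I_k, 0 <= p a 0) /\ \sum_(a < k) p a 0 = 1.

Definition payoff (R : realFieldType) (m n : nat)
  (p : 'cV[R]_m) (M : 'M[R]_(m, n)) (q : 'cV[R]_n) : R :=
  (p^T *m M *m q) 0 0.

Definition is_NE (R : realFieldType) (m n : nat) (A B : 'M[R]_(m, n))
  (p : 'cV[R]_m) (q : 'cV[R]_n) : Prop :=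
  [/\ in_simplex p, in_simplex q,
      (forall p' : 'cV[R]_m, in_simplex p' -> payoff p' A q <= payoff p A q)
    & (forall q' : 'cV[R]_n, in_simplex q' -> payoff p B q' <= payoff p B q)].

Definition strat_equiv (R : realFieldType) (m n : nat)
  (A B A' B' : 'M[R]_(m, n)) : Prop :=
  forall p q, is_NE A B p q <-> is_NE A' B' p q.

Definition rank1_game (R : realFieldType) (m n : nat) (A B : 'M[R]_(m, n)) : Prop :=
  \rank (A + B)%R = 1%N.

Definition barM (R : realFieldType) (m n : nat) (i : 'I_m) (j : 'I_n)
  (M : 'M[R]_(m, n)) : 'M[R]_(m, n) :=
  M - ones R m *m row i M - (col j M - M i j *: ones R m) *m (ones R n)^T.

Definition hatA (R : realFieldType) (m n : nat) (i : 'I_m)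
  (A B : 'M[R]_(m, n)) (g : R) : 'M[R]_(m, n) :=
  A - (ones R m *m row i A + g *: (ones R m *m row i B)).

Definition hatB (R : realFieldType) (m n : nat) (j : 'I_n)
  (A B : 'M[R]_(m, n)) (g : R) (i : 'I_m) : 'M[R]_(m, n) :=
  g *: B - ((col j A - A i j *: ones R m) *m (ones R n)^T
            + g *: ((col j B - B i j *: ones R m) *m (ones R n)^T)).

From HB Require Import structures.
From mathcomp Require Import all_boot all_order all_algebra.
From mathcomp Require Import ring.
Import Order.TTheory GRing.Theory Num.Theory.
Local Open Scope ring_scope.
Set Implicit Arguments.

(* Nash equilibria are unchanged when the row player's payoff
   matrix A is replaced by A - 1_m c (c any row vector) and the column
   player's matrix B by g B - d 1_n^T (d any column vector, g > 0): against a
   mixed strategy q of the opponent, every mixed strategy p' of the row player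
   loses the same amount c q, since p'^T 1_m = 1; symmetrically every q' of the
   column player has its payoff rescaled by g and shifted by p^T d.  The matrices
   \hat A(g), \hat B(g) are exactly of this shape, and their sum is the
   matrix \bar A + g \bar B by an entrywise identity (hatA_add_hatB); the
   theorem follows by combining the two facts. *)

Lemma simplex_mass (R : realFieldType) (k : nat) (p : 'cV[R]_k) :
  in_simplex p -> p^T *m ones R k = 1.
Proof.
case=> _ mass1; apply/matrixP=> a b; rewrite !ord1 !mxE -mass1.
by apply: eq_bigr => x _; rewrite !mxE mulr1.
Qed.

Lemma simplex_mass_tr (R : realFieldType) (k : nat) (q : 'cV[R]_k) :
  in_simplex q -> (ones R k)^T *m q = 1.
Proof. by move=> /simplex_mass mass1; rewrite -[q]trmxK -trmx_mul mass1 trmx1. Qed.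

Lemma payoff_sub_row_const (R : realFieldType) (m n : nat)
    (A : 'M[R]_(m, n)) (c : 'rV[R]_n) (p : 'cV[R]_m) (q : 'cV[R]_n) :
  in_simplex p -> payoff p (A - ones R m *m c) q = payoff p A q - (c *m q) 0 0.
Proof.
move=> hp; rewrite /payoff mulmxBr mulmxBl mulmxA (simplex_mass hp) mul1mx.
by rewrite !mxE.
Qed.

Lemma payoff_scale_sub_col_const (R : realFieldType) (m n : nat)
    (B : 'M[R]_(m, n)) (g : R) (d : 'cV[R]_m) (p : 'cV[R]_m) (q : 'cV[R]_n) :
  in_simplex q ->
  payoff p (g *: B - d *m (ones R n)^T) q = g * payoff p B q - (p^T *m d) 0 0.
Proof.
move=> hq; rewrite /payoff mulmxBr mulmxBl -!mulmxA (simplex_mass_tr hq) mulmx1.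
by rewrite -scalemxAl -scalemxAr !mxE.
Qed.

Lemma NE_shift_equiv (R : realFieldType) (m n : nat) (A B : 'M[R]_(m, n))
    (c : 'rV[R]_n) (d : 'cV[R]_m) (g : R) :
  0 < g -> strat_equiv A B (A - ones R m *m c) (g *: B - d *m (ones R n)^T).
Proof.
move=> g_gt0 p q; split=> -[hp hq best_p best_q]; split=> // [p' hp'|q' hq'].
- by rewrite !payoff_sub_row_const // lerD2r; apply: best_p.
- by rewrite !payoff_scale_sub_col_const // lerD2r ler_pM2l //; apply: best_q.
- by move: (best_p p' hp'); rewrite !payoff_sub_row_const // lerD2r.
- by move: (best_q q' hq'); rewrite !payoff_scale_sub_col_const // lerD2r ler_pM2l.
Qed.

Lemma hatA_row_shift (R : realFieldType) (m n : nat) (i : 'I_m)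
    (A B : 'M[R]_(m, n)) (g : R) :
  hatA i A B g = A - ones R m *m (row i A + g *: row i B).
Proof. by rewrite /hatA mulmxDr scalemxAr. Qed.

Lemma hatB_col_shift (R : realFieldType) (m n : nat) (i : 'I_m) (j : 'I_n)
    (A B : 'M[R]_(m, n)) (g : R) :
  hatB j A B g i = g *: B -
    ((col j A - A i j *: ones R m) + g *: (col j B - B i j *: ones R m))
      *m (ones R n)^T.
Proof. by rewrite /hatB [in RHS]mulmxDl -scalemxAl. Qed.

Lemma hatA_add_hatB (R : realFieldType) (m n : nat) (i : 'I_m) (j : 'I_n)
    (A B : 'M[R]_(m, n)) (g : R) :
  hatA i A B g + hatB j A B g i = barM i j A + g *: barM i j B.
Proof.
apply/matrixP=> a b; rewrite /hatA /hatB /barM /ones !mxE !big_ord1 !mxE.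
by ring.
Qed.

Theorem mainTheorem4 (R : realFieldType) (m n : nat)
  (At Bt : 'M[R]_(m, n)) (i : 'I_m) (j : 'I_n) (gs : R) :
  0 < gs -> \rank (barM i j At + gs *: barM i j Bt)%R = 1%N ->
  strat_equiv At Bt (hatA i At Bt gs) (hatB j At Bt gs i) /\
  rank1_game (hatA i At Bt gs) (hatB j At Bt gs i).
Proof.
move=> gs_gt0 rank_bar; split.
- by rewrite hatA_row_shift hatB_col_shift; apply: NE_shift_equiv.
- by rewrite /rank1_game hatA_add_hatB.
Qed.
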